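(* Let $X$ be a space having the metric sparsification property with constant $c\in(0,1]$ and function $f:\mathbb{N}\to\mathbb{N}$. Then for every $\omega\in\partial X$, the limit space $(X(\omega),d_\omega)$ has the metric sparsification property with the same constant $c$ and the same function $f$.
   Context: A *space* is a metric space $(X,d)$ that is strongly discrete (the set $\{d(x,y):x,y\in X\}$ is a discrete subset of $\mathbb{R}$) and has bounded geometry (for every $r>0$, $\sup_{x\in X}|B(x;r)|<\infty$). Metric sparsification property (MSP) with constant $c\in(0,1]$: there is a non-decreasing $f:\mathbb{N}\to\mathbb{N}$ such that for every $m\in\mathbb{N}$ and every finite positive measure $\mu$ on $X$ there is $\Omega=\bigsqcup_{i\in I}\Omega_i\subseteq X$ with $d(\Omega_i,\Omega_j)\ge m$ for $i\ne j$, $\operatorname{diam}(\Omega_i)\le f(m)$ for all $i$, and $\mu(\Omega)\ge c\mu(X)$. Ultrafilters: $\beta X$ is the Stone–Čech compactification (ultrafilters are finitely additive $\omega:\mathcal{P}(X)\to\{0,1\}$ with $\omega(X)=1$), $\partial X=\beta X\setminus X$. If $\omega(D)=1$ and $g:D\to K$, $K$ compact Hausdorff, $\lim_{x\to\omega}g(x)$ is the unique $k$ with $\omega(g^{-1}(U))=1$ for every neighbourhood $U$ of $k$. A partial translation is a bijection $t:D\to R$ between subsets of $X$ with $\sup_{x\in D}d(x,t(x))<\infty$; it is compatible with $\omega$ if $\omega(D)=1$, and then $t(\omega):=\lim_{x\to\omega}t(x)\in\beta X$. $X(\omega)$ is the set of all $t(\omega)$ with $t$ compatible with $\omega$; for a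 compatible family $\{t_\alpha\}_{\alpha\in X(\omega)}$ ($t_\alpha$ compatible with $\omega$, $t_\alpha(\omega)=\alpha$), $d_\omega(\alpha,\beta)=\lim_{x\to\omega}d(t_\alpha(x),t_\beta(x))$ is a metric on $X(\omega)$ independent of the family. *)

From Stdlib Require Import Reals List ClassicalEpsilon.
Open Scope R_scope.

Definition is_metric {X : Type} (d : X -> X -> R) : Prop :=
  (forall x y, 0 <= d x y) /\
  (forall x y, d x y = 0 <-> x = y) /\
  (forall x y, d x y = d y x) /\
  (forall x y z, d x z <= d x y + d y z).

Definition strongly_discrete {X : Type} (d : X -> X -> R) : Prop :=
  forall x y, exists eps, 0 < eps /\
    forall u v, Rabs (d u v - d x y) < eps -> d u v = d x y.

Definition bounded_geometry {X : Type} (d : X -> X -> R) : Prop :=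
  forall r, 0 < r -> exists N : nat, forall (x : X) (l : list X),
    NoDup l -> (forall y, In y l -> d x y <= r) -> (length l <= N)%nat.

Definition is_space {X : Type} (d : X -> X -> R) : Prop :=
  is_metric d /\ strongly_discrete d /\ bounded_geometry d.

Definition finite_pos_measure {T : Type} (mu : (T -> Prop) -> R) : Prop :=
  (forall A, 0 <= mu A) /\
  (forall A : nat -> T -> Prop,
     (forall i j x, i <> j -> A i x -> A j x -> False) ->
     infinite_sum (fun n => mu (A n)) (mu (fun x => exists n, A n x))).

Definition MSP {T : Type} (dist : T -> T -> R) (c : R) (f : nat -> nat) : Prop :=
  (forall m n, (m <= n)%nat -> (f m <= f n)%nat) /\
  forall (m : nat) (mu : (T -> Prop) -> R), finite_pos_measure mu ->
    exists (I : Type) (Om : I -> T -> Prop),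
      (forall i j x, i <> j -> Om i x -> Om j x -> False) /\
      (forall i j x y, i <> j -> Om i x -> Om j y -> INR m <= dist x y) /\
      (forall i x y, Om i x -> Om i y -> dist x y <= INR (f m)) /\
      c * mu (fun _ => True) <= mu (fun x => exists i, Om i x).

Record ultrafilter (X : Type) := {
  uf :> (X -> Prop) -> Prop;
  uf_full : uf (fun _ => True);
  uf_empty : ~ uf (fun _ => False);
  uf_mono : forall A B : X -> Prop, (forall x, A x -> B x) -> uf A -> uf B;
  uf_inter : forall A B, uf A -> uf B -> uf (fun x => A x /\ B x);
  uf_ultra : forall A : X -> Prop, uf A \/ uf (fun x => ~ A x)
}.
Arguments uf {X}.

(** omega lies in the boundary dX = beta X \ X (X = principal ultrafilters) *)
Definition in_boundary {X : Type} (w : ultrafilter X) : Prop :=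
  ~ exists x : X, forall A : X -> Prop, uf w A <-> A x.

Definition partial_translation {X : Type} (d : X -> X -> R)
    (D : X -> Prop) (t : X -> X) : Prop :=
  (forall x y, D x -> D y -> t x = t y -> x = y) /\
  (exists K, forall x, D x -> d x (t x) <= K).

Definition compatible {X : Type} (d : X -> X -> R) (w : ultrafilter X)
    (D : X -> Prop) (t : X -> X) : Prop :=
  partial_translation d D t /\ uf w D.

(** lim_{x -> w} t(x) = a in beta X: for every basic neighbourhood
    {b | b(A) = 1} of a, w({x in D | t x in A}) = 1 *)
Definition ulim_beta {X : Type} (w : ultrafilter X) (D : X -> Prop)
    (t : X -> X) (a : ultrafilter X) : Prop :=
  forall A : X -> Prop, uf a A -> uf w (fun x => D x /\ A (t x)).

Definition ulim_R {X : Type} (w : ultrafilter X) (D : X -> Prop)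
    (g : X -> R) (r : R) : Prop :=
  forall eps, 0 < eps -> uf w (fun x => D x /\ Rabs (g x - r) < eps).

Definition translate_to {X : Type} (d : X -> X -> R) (w : ultrafilter X)
    (D : X -> Prop) (t : X -> X) (a : ultrafilter X) : Prop :=
  compatible d w D t /\ ulim_beta w D t a.

Definition Xlim {X : Type} (d : X -> X -> R) (w : ultrafilter X) : Type :=
  { a : ultrafilter X | exists D t, translate_to d w D t a }.

(** d_w(a,b) = lim_{x -> w} d(t_a x, t_b x), for (any) compatible t_a, t_b
    with t_a(w) = a, t_b(w) = b (the value is independent of the choice). *)
Definition d_lim {X : Type} (d : X -> X -> R) (w : ultrafilter X)
    (a b : Xlim d w) : R :=
  epsilon (inhabits 0%R) (fun r =>
    forall Da ta Db tb,
      translate_to d w Da ta (proj1_sig a) ->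
      translate_to d w Db tb (proj1_sig b) ->
      ulim_R w (fun x => Da x /\ Db x) (fun x => d (ta x) (tb x)) r).

(** For each [x] in
    [X], push [mu] forward along [a |-> t_a(x)] and sparsify it in [X]; call [a] and
    [b] related when [t_a(x)] and [t_b(x)] lie in the same piece for [w]-almost all
    [x].  Separation and diameter bounds pass to [d_w], a [w]-limit of
    [d(t_a(x), t_b(x))].  For the mass, [mu] is concentrated up to [eps] on the finitely
    many points reached by translations of displacement at most [K], and on a finite
    set the [w]-limit of membership is attained at a single [x].  That [d_w] is
    well defined rests on bounded geometry: two translations with the same limit
    agree [w]-almost everywhere, as a bounded coloring of [X] shows. *)

From Stdlib Require Import Reals.
From Stdlib Require Import Lra Lia List ClassicalEpsilon Classical
  FunctionalExtensionality PropExtensionality ProofIrrelevance Cantor.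
Open Scope R_scope.

Lemma pred_ext {T : Type} (P Q : T -> Prop) : (forall x, P x <-> Q x) -> P = Q.
Proof.
  intro H. apply functional_extensionality; intro x.
  apply propositional_extensionality; auto.
Qed.

Lemma mu_ext {T : Type} (mu : (T -> Prop) -> R) (P Q : T -> Prop) :
  (forall x, P x <-> Q x) -> mu P = mu Q.
Proof. intro H. now rewrite (pred_ext P Q H). Qed.

Lemma sum_f_R0_const (a : R) (n : nat) : sum_f_R0 (fun _ => a) n = INR (S n) * a.
Proof.
  induction n as [|n IH]; simpl sum_f_R0; [simpl; lra|].
  rewrite IH, !S_INR. lra.
Qed.

Lemma infinite_sum_two (s : nat -> R) :
  (forall n, (2 <= n)%nat -> s n = 0) -> infinite_sum s (s 0%nat + s 1%nat).
Proof.
  intros Hz eps Heps. exists 1%nat. intros n Hn.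
  assert (Hsum : sum_f_R0 s n = s 0%nat + s 1%nat).
  { induction n as [|n IH]; [lia|]. destruct n; [simpl; lra|].
    change (sum_f_R0 s (S (S n))) with (sum_f_R0 s (S n) + s (S (S n))).
    rewrite (Hz (S (S n))), IH by lia. lra. }
  unfold Rdist. rewrite Hsum, Rminus_diag, Rabs_R0. exact Heps.
Qed.

Section FiniteMeasure.

Variables (T : Type) (mu : (T -> Prop) -> R).
Hypothesis Hmu : finite_pos_measure mu.

Lemma mu_ge0 (A : T -> Prop) : 0 <= mu A.
Proof. exact (proj1 Hmu A). Qed.

Lemma mu_empty : mu (fun _ => False) = 0.
Proof.
  set (a := mu (fun _ => False)).
  assert (Hsum : infinite_sum (fun _ => a) a).
  { pose proof (proj2 Hmu (fun _ _ => False) ltac:(intros; contradiction)) as H.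
    rewrite (mu_ext mu _ (fun _ => False)) in H; [exact H|].
    intro x; split; [intros [_ []] | intros []]. }
  destruct (Rle_lt_or_eq_dec 0 a (mu_ge0 _)) as [Hpos|]; [exfalso|auto].
  destruct (Hsum a Hpos) as [N HN]. specialize (HN (S N) (Nat.le_succ_diag_r N)).
  unfold Rdist in HN. rewrite sum_f_R0_const, !S_INR in HN.
  pose proof (pos_INR N). rewrite Rabs_right in HN by nra. nra.
Qed.

Lemma mu_union_disjoint (A B : T -> Prop) :
  (forall x, A x -> B x -> False) -> mu (fun x => A x \/ B x) = mu A + mu B.
Proof.
  intro Hdis.
  set (S n := match n with 0%nat => A | 1%nat => B | _ => fun _ => False end).
  assert (HS : forall i j x, i <> j -> S i x -> S j x -> False).
  { intros [|[|i]] [|[|j]] x Hij; simpl; intros; try lia; eauto. }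
  pose proof (proj2 Hmu S HS) as Hsum.
  rewrite (mu_ext mu _ (fun x => A x \/ B x)) in Hsum.
  - apply (uniqueness_sum _ _ _ Hsum), infinite_sum_two.
    intros [|[|n]] Hn; [lia|lia|exact mu_empty].
  - intro x; split.
    + intros [[|[|n]] Hn]; simpl in Hn; tauto.
    + intros [H|H]; [exists 0%nat | exists 1%nat]; exact H.
Qed.

Lemma mu_split (A B : T -> Prop) :
  mu A = mu (fun x => A x /\ B x) + mu (fun x => A x /\ ~ B x).
Proof.
  rewrite <- mu_union_disjoint by tauto.
  apply mu_ext. intro x. destruct (classic (B x)); tauto.
Qed.

Lemma mu_mono (A B : T -> Prop) : (forall x, A x -> B x) -> mu A <= mu B.
Proof.
  intro HAB. rewrite (mu_split B A), (mu_ext mu (fun x => B x /\ A x) A) by firstorder.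
  pose proof (mu_ge0 (fun x => B x /\ ~ A x)). lra.
Qed.

(** Continuity from below, stated for the complements of an increasing cover. *)
Lemma mu_compl_exhaustion_lt (G : nat -> T -> Prop) :
  (forall k x, G k x -> G (S k) x) -> (forall x, exists k, G k x) ->
  forall eps, 0 < eps -> exists K, mu (fun x => ~ G K x) < eps.
Proof.
  intros Hinc Hcov eps Heps.
  assert (Hle : forall k k' x, (k <= k')%nat -> G k x -> G k' x)
    by (intros k k' x Hk; induction Hk; auto).
  set (L n := match n with O => G O | S k => fun x => G (S k) x /\ ~ G k x end).
  assert (HL : forall i j x, i <> j -> L i x -> L j x -> False).
  { enough (H : forall i j x, (i < j)%nat -> L i x -> L j x -> False).
    { intros i j x Hij. destruct (Nat.lt_total i j) as [|[|]]; eauto. }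
    intros i [|j] x Hij Hi Hj; [lia|]. apply (proj2 Hj).
    destruct i; [|destruct Hi as [Hi _]]; (eapply Hle; [|exact Hi]; lia). }
  assert (Hpartial : forall K, sum_f_R0 (fun n => mu (L n)) K = mu (G K)).
  { induction K as [|K IH]; [reflexivity|]. simpl sum_f_R0. rewrite IH.
    rewrite <- mu_union_disjoint by (intros x ? [_ ?]; auto).
    apply mu_ext. intro x. simpl. destruct (classic (G K x)); firstorder. }
  pose proof (proj2 Hmu L HL) as Hsum.
  rewrite (mu_ext mu _ (fun _ => True)) in Hsum.
  2:{ intro x; split; [auto|intros _]. destruct (Hcov x) as [k Hk]. clear Hcov.
      induction k as [|k IH]; [exists O; exact Hk|].
      destruct (classic (G k x)); [auto | exists (S k); simpl; auto]. }
  destruct (Hsum eps Heps) as [K HK]. exists K. specialize (HK K (le_n K)).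
  rewrite Hpartial in HK. unfold Rdist in HK.
  rewrite (mu_split (fun _ => True) (G K)) in HK.
  rewrite (mu_ext mu (fun x => True /\ G K x) (G K)),
    (mu_ext mu (fun x => True /\ ~ G K x) (fun x => ~ G K x)) in HK by tauto.
  replace (mu (G K) - (mu (G K) + mu (fun x => ~ G K x)))
    with (- mu (fun x => ~ G K x)) in HK by ring.
  rewrite Rabs_Ropp, Rabs_right in HK by (apply Rle_ge, mu_ge0). exact HK.
Qed.

End FiniteMeasure.

Lemma ultrafilter_ext {X : Type} (u v : ultrafilter X) :
  (forall A, uf u A <-> uf v A) -> u = v.
Proof.
  intro H. assert (E : uf u = uf v) by (apply pred_ext; exact H).
  destruct u, v; simpl in E; subst. f_equal; apply proof_irrelevance.
Qed.

Section Ultrafilter.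

Variables (X : Type) (w : ultrafilter X).

Lemma uf_inhabited (P : X -> Prop) : uf w P -> exists x, P x.
Proof.
  intro HP. apply NNPP; intro Hn. apply (uf_empty X w).
  apply (uf_mono X w P); [|exact HP]. intros x Hx; apply Hn; eauto.
Qed.

Lemma uf_inter3 (A B C : X -> Prop) :
  uf w A -> uf w B -> uf w C -> uf w (fun x => A x /\ B x /\ C x).
Proof. intros. do 2 (apply uf_inter; auto). Qed.

Lemma uf_compl (A : X -> Prop) : ~ uf w A -> uf w (fun x => ~ A x).
Proof. intro H. destruct (uf_ultra X w A); tauto. Qed.

Lemma uf_compl_not (A : X -> Prop) : uf w (fun x => ~ A x) -> ~ uf w A.
Proof.
  intros Hc HA. apply (uf_empty X w).
  apply (uf_mono X w (fun x => A x /\ ~ A x)); [tauto | apply uf_inter; auto].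
Qed.

Lemma uf_forall_list {I : Type} (l : list I) (Q : I -> X -> Prop) :
  (forall i, In i l -> uf w (Q i)) -> uf w (fun x => forall i, In i l -> Q i x).
Proof.
  induction l as [|i l IH]; intro H.
  - apply (uf_mono X w (fun _ => True)); [intros x _ i []|apply uf_full].
  - apply (uf_mono X w (fun x => Q i x /\ forall j, In j l -> Q j x)).
    + intros x [Hi Hl] j [<-|Hj]; auto.
    + apply uf_inter; [apply H; left; auto | apply IH; intros; apply H; right; auto].
Qed.

Lemma uf_color_class (P : X -> Prop) (col : X -> nat) (M : nat) :
  uf w P -> (forall x, P x -> (col x < M)%nat) ->
  exists i, uf w (fun x => P x /\ col x = i).
Proof.
  revert P. induction M as [|M IH]; intros P HP Hcol.
  - destruct (uf_inhabited P HP) as [x Hx]. specialize (Hcol x Hx). lia.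
  - destruct (uf_ultra X w (fun x => P x /\ col x = M)) as [H|H]; [eauto|].
    destruct (IH (fun x => P x /\ col x <> M)) as [i Hi].
    + eapply uf_mono; [|exact (uf_inter X w _ _ HP H)]. cbv beta; tauto.
    + intros x [Hx HM]. specialize (Hcol x Hx). lia.
    + exists i. apply (uf_mono X w _ _ (fun x H => conj (proj1 (proj1 H)) (proj2 H)) Hi).
Qed.

Lemma ulim_beta_uf (D : X -> Prop) (t : X -> X) (a : ultrafilter X) (A : X -> Prop) :
  ulim_beta w D t a -> uf w (fun x => D x /\ A (t x)) -> uf a A.
Proof.
  intros Hlim HA. destruct (uf_ultra X a A) as [|Hc]; [auto|exfalso].
  apply (uf_compl_not (fun x => D x /\ A (t x))); [|exact HA].
  eapply uf_mono; [|exact (Hlim _ Hc)]. cbv beta; tauto.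
Qed.

Lemma ulim_beta_eq_of_agree (D D' : X -> Prop) (t t' : X -> X) (a b : ultrafilter X) :
  ulim_beta w D t a -> ulim_beta w D' t' b ->
  uf w (fun x => D x /\ D' x /\ t x = t' x) -> a = b.
Proof.
  assert (Hsub : forall D t D' t' (u v : ultrafilter X), ulim_beta w D t u -> ulim_beta w D' t' v ->
            uf w (fun x => D x /\ D' x /\ t x = t' x) -> forall A, uf u A -> uf v A).
  { intros D1 t1 D2 t2 u v Hu Hv Hagree A HA. apply (ulim_beta_uf D2 t2 v A Hv).
    eapply uf_mono; [|exact (uf_inter X w _ _ (Hu A HA) Hagree)].
    intros x [[_ HAx] [_ [HD2 E]]]. rewrite <- E. auto. }
  intros Ha Hb Hagree. apply ultrafilter_ext. intro A; split; [eauto|].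
  apply (Hsub D' t' D t); auto.
  eapply uf_mono; [|exact Hagree]. intros x [? [? E]]. auto.
Qed.

Lemma ulim_R_exists (D : X -> Prop) (g : X -> R) (K : R) :
  uf w D -> (forall x, D x -> 0 <= g x <= K) -> exists r, ulim_R w D g r.
Proof.
  intros HD Hg.
  set (E s := uf w (fun x => D x /\ s <= g x)).
  assert (E0 : E 0) by (eapply uf_mono; [|exact HD]; intros x Hx; split; [|apply Hg]; auto).
  assert (Ebound : bound E).
  { exists K. intros s Hs. destruct (uf_inhabited _ Hs) as [x [Hx Hsx]].
    specialize (Hg x Hx). lra. }
  destruct (completeness E Ebound (ex_intro _ 0 E0)) as [r [Hub Hlub]].
  exists r. intros eps Heps.
  assert (Hbelow : exists s, E s /\ r - eps / 2 < s).
  { apply NNPP; intro Hn. enough (r <= r - eps / 2) by lra. apply Hlub.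
    intros s Hs. apply Rnot_lt_le; intro; apply Hn; eauto. }
  destruct Hbelow as [s [Hs Hrs]].
  assert (Habove : ~ E (r + eps / 2)) by (intro H; specialize (Hub _ H); lra).
  eapply uf_mono; [|exact (uf_inter X w _ _ Hs (uf_compl _ Habove))].
  intros x [[Hx Hsx] Hn]. split; [exact Hx|].
  assert (g x < r + eps / 2) by (apply Rnot_le_lt; tauto).
  apply Rabs_def1; lra.
Qed.

Lemma ulim_R_le (D : X -> Prop) (g : X -> R) (r h : R) :
  ulim_R w D g r -> uf w (fun x => D x /\ g x <= h) -> r <= h.
Proof.
  intros Hlim H. apply Rnot_lt_le; intro Hlt.
  destruct (uf_inhabited _ (uf_inter X w _ _ H (Hlim (r - h) ltac:(lra))))
    as [x [[_ H1] [_ H2]]].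
  apply Rabs_def2 in H2. lra.
Qed.

Lemma ulim_R_ge (D : X -> Prop) (g : X -> R) (r h : R) :
  ulim_R w D g r -> uf w (fun x => D x /\ h <= g x) -> h <= r.
Proof.
  intros Hlim H. apply Rnot_lt_le; intro Hlt.
  destruct (uf_inhabited _ (uf_inter X w _ _ H (Hlim (h - r) ltac:(lra))))
    as [x [[_ H1] [_ H2]]].
  apply Rabs_def2 in H2. lra.
Qed.

End Ultrafilter.

Lemma list_of_bounded_NoDup {T : Type} (P : T -> Prop) (N : nat) :
  (forall l, NoDup l -> (forall x, In x l -> P x) -> (length l <= N)%nat) ->
  exists l, NoDup l /\ forall x, P x <-> In x l.
Proof.
  intro Hbound.
  enough (H : forall n l, NoDup l -> (forall x, In x l -> P x) -> (N - length l <= n)%nat ->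
                exists l', NoDup l' /\ forall x, P x <-> In x l').
  { apply (H N nil); [constructor | intros _ [] | lia]. }
  induction n as [|n IH]; intros l Hl HP Hlen;
    (destruct (classic (forall x, P x -> In x l)) as [Hall|Hnot];
     [exists l; split; [exact Hl | intro x; split; auto] |]);
    apply not_all_ex_not in Hnot; destruct Hnot as [x Hx];
    apply imply_to_and in Hx; destruct Hx as [Px Hx].
  - specialize (Hbound (x :: l) (NoDup_cons x Hx Hl)). simpl in Hbound.
    enough (S (length l) <= N)%nat by lia. apply Hbound. intros y [<-|Hy]; auto.
  - apply (IH (x :: l)); [constructor; auto | intros y [<-|Hy]; auto |].
    specialize (Hbound (x :: l) (NoDup_cons x Hx Hl)). simpl in *.
    enough (S (length l) <= N)%nat by lia. apply Hbound. intros y [<-|Hy]; auto.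
Qed.

Lemma nat_above (r : R) : exists n : nat, r <= INR n.
Proof. destruct (INR_archimed 1 r) as [n Hn]; [lra|]. exists n; lra. Qed.

Lemma bounded_geometry_countable {X : Type} (d : X -> X -> R) (x0 : X) :
  bounded_geometry d -> exists e : nat -> X, forall y, exists k, e k = y.
Proof.
  intro Hbg.
  assert (Hball : forall n : nat, exists l, forall y, d x0 y <= INR n + 1 <-> In y l).
  { intro n. destruct (Hbg (INR n + 1)) as [N HN]; [pose proof (pos_INR n); lra|].
    destruct (list_of_bounded_NoDup (fun y => d x0 y <= INR n + 1) N) as [l [_ Hl]];
      [apply HN | eauto]. }
  destruct (choice _ Hball) as [ball Hb].
  exists (fun k => let (n, j) := of_nat k in nth j (ball n) x0).
  intro y. destruct (nat_above (d x0 y)) as [n Hn].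
  destruct (In_nth (ball n) y x0 (proj1 (Hb n y) ltac:(lra))) as [j [_ Hj]].
  exists (to_nat (n, j)). rewrite cancel_of_to. exact Hj.
Qed.

Lemma exists_fresh_below (M : nat) (l : list nat) :
  (length l < M)%nat -> exists c, (c < M)%nat /\ ~ In c l.
Proof.
  intro Hlen. apply NNPP; intro Hn.
  assert (Hincl : incl (seq 0 M) l).
  { intros c Hc. apply in_seq in Hc. apply NNPP; intro Hnc. apply Hn; exists c; split; [lia|auto]. }
  pose proof (NoDup_incl_length (seq_NoDup M 0) Hincl). rewrite length_seq in *. lia.
Qed.

Section GreedyColoring.

Variables (adj : nat -> nat -> Prop) (M : nat).
Hypothesis adj_degree : forall n l,
  NoDup l -> (forall k, In k l -> adj k n) -> (length l < M)%nat.

Definition earlier_neighbours (n : nat) : list nat :=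
  filter (fun k => if excluded_middle_informative (adj k n) then true else false) (seq 0 n).

Lemma in_earlier_neighbours k n : In k (earlier_neighbours n) <-> (k < n)%nat /\ adj k n.
Proof.
  unfold earlier_neighbours. rewrite filter_In, in_seq.
  destruct (excluded_middle_informative (adj k n)); intuition (try lia; discriminate).
Qed.

(** [greedy n] lists the colors of the vertices [0 .. n-1]. *)
Fixpoint greedy (n : nat) : list nat :=
  match n with
  | O => nil
  | S n =>
      let l := greedy n in
      l ++ epsilon (inhabits 0%nat) (fun c => (c < M)%nat /\
              ~ In c (map (fun k => nth k l 0%nat) (earlier_neighbours n))) :: nil
  end.

Lemma greedy_length n : length (greedy n) = n.
Proof. induction n as [|n IH]; simpl; [auto|]. rewrite length_app, IH; simpl; lia. Qed.

Lemma greedy_prefix n m k : (k < n)%nat -> (n <= m)%nat ->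
  nth k (greedy m) 0%nat = nth k (greedy n) 0%nat.
Proof.
  intros Hk Hnm. induction Hnm as [|m Hnm IH]; [auto|].
  simpl. rewrite app_nth1; [auto|]. rewrite greedy_length; lia.
Qed.

Definition greedy_color (n : nat) : nat := nth n (greedy (S n)) 0%nat.

Lemma greedy_color_spec n :
  (greedy_color n < M)%nat /\
  ~ In (greedy_color n) (map greedy_color (earlier_neighbours n)).
Proof.
  assert (Hprev : map (fun k => nth k (greedy n) 0%nat) (earlier_neighbours n)
                  = map greedy_color (earlier_neighbours n)).
  { apply map_ext_in. intros k Hk. apply in_earlier_neighbours in Hk.
    unfold greedy_color. apply (greedy_prefix (S k)); lia. }
  assert (Hc : greedy_color n = epsilon (inhabits 0%nat) (fun c => (c < M)%nat /\
                 ~ In c (map (fun k => nth k (greedy n) 0%nat) (earlier_neighbours n)))).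
  { unfold greedy_color. simpl. rewrite app_nth2; rewrite greedy_length; [|lia].
    rewrite Nat.sub_diag. reflexivity. }
  rewrite Hc, <- Hprev. apply epsilon_spec, exists_fresh_below.
  rewrite length_map. apply (adj_degree n); [apply NoDup_filter, seq_NoDup|].
  intros k Hk. apply in_earlier_neighbours in Hk. tauto.
Qed.

Lemma greedy_color_proper k n : (k < n)%nat -> adj k n -> greedy_color k <> greedy_color n.
Proof.
  intros Hk Hadj E. apply (proj2 (greedy_color_spec n)). rewrite <- E.
  apply in_map, in_earlier_neighbours. auto.
Qed.

End GreedyColoring.

Lemma bounded_geometry_coloring {X : Type} (d : X -> X -> R) (x0 : X) (r : R) :
  is_metric d -> bounded_geometry d -> 0 < r ->
  exists (M : nat) (col : X -> nat), (forall y, (col y < M)%nat) /\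
    forall y z, y <> z -> d y z <= r -> col y <> col z.
Proof.
  intros [_ [_ [Hsym _]]] Hbg Hr.
  destruct (bounded_geometry_countable d x0 Hbg) as [e He].
  destruct (choice _ He) as [code Hcode].
  destruct (Hbg r Hr) as [N HN].
  set (adj k n := e k <> e n /\ d (e n) (e k) <= r /\ code (e k) = k).
  assert (Hdeg : forall n l, NoDup l -> (forall k, In k l -> adj k n) -> (length l < S N)%nat).
  { intros n l Hl Hadj. rewrite <- (length_map e).
    enough (length (map e l) <= N)%nat by lia. apply (HN (e n)).
    - apply NoDup_map_NoDup_ForallPairs; [|exact Hl].
      intros k k' Hk Hk' E. destruct (Hadj k Hk) as [_ [_ <-]], (Hadj k' Hk') as [_ [_ <-]].
      now rewrite E.
    - intros y Hy. apply in_map_iff in Hy. destruct Hy as [k [<- Hk]]. apply Hadj, Hk. }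
  exists (S N), (fun y => greedy_color adj (S N) (code y)). split.
  - intro y. apply (greedy_color_spec adj (S N) Hdeg).
  - intros y z Hyz Hd.
    assert (Hne : code y <> code z)
      by (intro E; apply Hyz; rewrite <- (Hcode y), <- (Hcode z), E; auto).
    destruct (Nat.lt_total (code y) (code z)) as [Hlt|[|Hlt]]; [| contradiction |].
    + apply (greedy_color_proper adj (S N) Hdeg); [exact Hlt|].
      unfold adj. rewrite !Hcode, Hsym. auto.
    + apply not_eq_sym, (greedy_color_proper adj (S N) Hdeg); [exact Hlt|].
      unfold adj. rewrite !Hcode. auto.
Qed.

Section LimitSpace.

Variables (X : Type) (d : X -> X -> R) (w : ultrafilter X).
Hypotheses (Hmetric : is_metric d) (Hbg : bounded_geometry d).

Lemma dist_le_via (x y z : X) (K K' : R) :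
  d x y <= K -> d x z <= K' -> d y z <= K + K'.
Proof.
  destruct Hmetric as [_ [_ [Hsym Htri]]]. intros Hy Hz.
  pose proof (Htri y x z). rewrite (Hsym y x) in *. lra.
Qed.

(** Bounded geometry gives a coloring of [X] in which points at distance at most
    [r] differ in color; two translations that differ [w]-often but stay close
    would then push [w] onto both a color class and its complement. *)
Lemma translate_to_agree (D D' : X -> Prop) (t t' : X -> X) (a : ultrafilter X) :
  translate_to d w D t a -> translate_to d w D' t' a ->
  uf w (fun x => D x /\ D' x /\ t x = t' x).
Proof.
  intros [[[_ [K HK]] HD] Hlim] [[[_ [K' HK']] HD'] Hlim'].
  apply NNPP; intro Hn.
  set (F x := D x /\ D' x /\ t x <> t' x).
  assert (HF : uf w F).
  { eapply uf_mono; [|exact (uf_inter3 X w _ _ _ HD HD' (uf_compl X w _ Hn))].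
    unfold F; tauto. }
  destruct (uf_inhabited X w F HF) as [x0 _].
  set (r := Rabs K + Rabs K' + 1).
  assert (Hr : 0 < r) by (pose proof (Rabs_pos K); pose proof (Rabs_pos K'); unfold r; lra).
  destruct (bounded_geometry_coloring d x0 r Hmetric Hbg Hr) as [M [col [Hcol Hproper]]].
  destruct (uf_color_class X w F (fun x => col (t x)) M HF (fun x _ => Hcol (t x)))
    as [i Hi].
  apply (uf_compl_not X a (fun y => col y = i)).
  - apply (ulim_beta_uf X w D' t' a _ Hlim').
    eapply uf_mono; [|exact Hi]. intros x [[Hx [Hx' Hne]] Hc]. split; [exact Hx'|].
    intro E. apply (Hproper (t x) (t' x) Hne); [|congruence].
    pose proof (Rle_abs K); pose proof (Rle_abs K').
    pose proof (dist_le_via x (t x) (t' x) K K' (HK x Hx) (HK' x Hx')). unfold r; lra.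
  - apply (ulim_beta_uf X w D t a _ Hlim).
    eapply uf_mono; [|exact Hi]. intros x [[Hx _] Hc]. auto.
Qed.

Lemma ulim_R_translations (Da Db Da' Db' : X -> Prop) (ta tb ta' tb' : X -> X)
    (a b : ultrafilter X) (r : R) :
  translate_to d w Da ta a -> translate_to d w Db tb b ->
  translate_to d w Da' ta' a -> translate_to d w Db' tb' b ->
  ulim_R w (fun x => Da x /\ Db x) (fun x => d (ta x) (tb x)) r ->
  ulim_R w (fun x => Da' x /\ Db' x) (fun x => d (ta' x) (tb' x)) r.
Proof.
  intros Ha Hb Ha' Hb' Hlim eps Heps.
  pose proof (translate_to_agree _ _ _ _ _ Ha' Ha) as Hagree_a.
  pose proof (translate_to_agree _ _ _ _ _ Hb' Hb) as Hagree_b.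
  eapply uf_mono; [|exact (uf_inter3 X w _ _ _ Hagree_a Hagree_b (Hlim eps Heps))].
  intros x [[Hxa [_ Ea]] [[Hxb [_ Eb]] [_ Hclose]]]. rewrite Ea, Eb. auto.
Qed.

Lemma d_lim_ulim (a b : Xlim d w) (Da Db : X -> Prop) (ta tb : X -> X) :
  translate_to d w Da ta (proj1_sig a) -> translate_to d w Db tb (proj1_sig b) ->
  ulim_R w (fun x => Da x /\ Db x) (fun x => d (ta x) (tb x)) (d_lim d w a b).
Proof.
  intros Ha Hb. pose proof Ha as [[[_ [Ka HKa]] HDa] _]. pose proof Hb as [[[_ [Kb HKb]] HDb] _].
  destruct (ulim_R_exists X w (fun x => Da x /\ Db x) (fun x => d (ta x) (tb x)) (Ka + Kb))
    as [r Hr].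
  - apply uf_inter; auto.
  - intros x [Hxa Hxb]. split; [apply (proj1 Hmetric)|].
    exact (dist_le_via _ _ _ _ _ (HKa x Hxa) (HKb x Hxb)).
  - unfold d_lim. apply (epsilon_spec (inhabits 0%R)
      (fun r => forall Da ta Db tb, translate_to d w Da ta (proj1_sig a) ->
         translate_to d w Db tb (proj1_sig b) ->
         ulim_R w (fun x => Da x /\ Db x) (fun x => d (ta x) (tb x)) r));
      [|exact Ha|exact Hb].
    exists r. intros Da' ta' Db' tb' Ha' Hb'.
    exact (ulim_R_translations _ _ _ _ _ _ _ _ _ _ _ Ha Hb Ha' Hb' Hr).
Qed.

Definition displacement_le (D : X -> Prop) (t : X -> X) (K : R) : Prop :=
  forall x, D x -> d x (t x) <= K.

Section ChosenTranslations.

Variables (D : Xlim d w -> X -> Prop) (t : Xlim d w -> X -> X).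
Hypothesis Htr : forall a, translate_to d w (D a) (t a) (proj1_sig a).

Lemma translations_differ (a b : Xlim d w) :
  a <> b -> uf w (fun x => D a x /\ D b x /\ t a x <> t b x).
Proof.
  intro Hab. apply NNPP; intro Hn. apply Hab.
  apply eq_sig_hprop; [intros; apply proof_irrelevance|].
  apply (ulim_beta_eq_of_agree X w (D a) (D b) (t a) (t b)); [apply Htr|apply Htr|].
  pose proof (uf_compl X w _ Hn) as Hc.
  eapply uf_mono; [|exact (uf_inter3 X w _ _ _ (proj2 (proj1 (Htr a))) (proj2 (proj1 (Htr b))) Hc)].
  intros x [? [? H]]. repeat split; auto. apply NNPP; intro; apply H; auto.
Qed.

(** Only finitely many points of [X(w)] are reached by translations of bounded
    displacement: at a single [w]-typical [x] they are distinct points of a ball. *)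
Lemma displacement_le_finite (K : R) :
  exists l, forall a, displacement_le (D a) (t a) K -> In a l.
Proof.
  destruct (Hbg (Rabs K + 1)) as [N HN]; [pose proof (Rabs_pos K); lra|].
  destruct (list_of_bounded_NoDup (fun a => displacement_le (D a) (t a) K) N) as [l [_ Hl]];
    [|exists l; intros a Ha; apply Hl, Ha].
  intros l Hnodup Hdisp.
  assert (Hw : uf w (fun x => (forall a, In a l -> D a x) /\
             forall a, In a l -> forall b, In b l -> a <> b -> t a x <> t b x)).
  { apply uf_inter; apply uf_forall_list; intros a _; [exact (proj2 (proj1 (Htr a)))|].
    apply uf_forall_list. intros b _. destruct (classic (a = b)) as [<-|Hab].
    - eapply uf_mono; [|apply uf_full]. intros x _ H; contradiction.
    - eapply uf_mono; [|exact (translations_differ a b Hab)]. intros x [_ [_ H]] _; exact H. }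
  destruct (uf_inhabited X w _ Hw) as [x [HD Hinj]].
  rewrite <- (length_map (fun a => t a x)). apply (HN x).
  - apply NoDup_map_NoDup_ForallPairs; [|exact Hnodup].
    intros a b Ha Hb E. apply NNPP; intro Hne. exact (Hinj a Ha b Hb Hne E).
  - intros y Hy. apply in_map_iff in Hy. destruct Hy as [a [<- Ha]].
    pose proof (Rle_abs K). pose proof (Hdisp a Ha x (HD a Ha)). lra.
Qed.

End ChosenTranslations.

End LimitSpace.

(** The sets [Omega_i] of the metric sparsification property, encoded as the
    classes of a partial equivalence relation; [Omega] is its domain [{y | Rel y y}]. *)
Record sparse_per {T : Type} (dist : T -> T -> R) (m F : nat) (Rel : T -> T -> Prop) : Prop := {
  per_sym : forall y z, Rel y z -> Rel z y;
  per_trans : forall y z u, Rel y z -> Rel z u -> Rel y u;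
  per_diam : forall y z, Rel y z -> dist y z <= INR F;
  per_sep : forall y z, Rel y y -> Rel z z -> ~ Rel y z -> INR m <= dist y z
}.

Lemma MSP_sparse_per {T : Type} (dist : T -> T -> R) (c : R) (f : nat -> nat) :
  MSP dist c f -> forall m (mu : (T -> Prop) -> R), finite_pos_measure mu ->
  exists Rel, sparse_per dist m (f m) Rel /\ c * mu (fun _ => True) <= mu (fun y => Rel y y).
Proof.
  intros [_ Hmsp] m mu Hmu.
  destruct (Hmsp m mu Hmu) as [I [Om [Hdis [Hsep [Hdiam Hmass]]]]].
  exists (fun y z => exists i, Om i y /\ Om i z). split; [split|].
  - intros y z [i [Hy Hz]]; eauto.
  - intros y z u [i [Hy Hz]] [j [Hz' Hu]].
    destruct (classic (i = j)) as [<-|Hij]; [eauto | exfalso; eauto].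
  - intros y z [i [Hy Hz]]; eauto.
  - intros y z [i [Hy _]] [j [Hz _]] Hn.
    destruct (classic (i = j)) as [<-|Hij]; [exfalso; eauto | eauto].
  - eapply Rle_trans; [exact Hmass|]. right. apply mu_ext. firstorder.
Qed.

Lemma MSP_of_sparse_per {T : Type} (dist : T -> T -> R) (c : R) (f : nat -> nat) :
  (forall m n, (m <= n)%nat -> (f m <= f n)%nat) ->
  (forall m (mu : (T -> Prop) -> R), finite_pos_measure mu ->
    exists Rel, sparse_per dist m (f m) Rel /\ c * mu (fun _ => True) <= mu (fun y => Rel y y)) ->
  MSP dist c f.
Proof.
  intros Hf Hper. split; [exact Hf|]. intros m mu Hmu.
  destruct (Hper m mu Hmu) as [Rel [[Hsym Htrans Hdiam Hsep] Hmass]].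
  assert (Hclass : forall a b y, Rel a y -> Rel b y -> Rel a = Rel b).
  { intros a b y Ha Hb. apply pred_ext. intro z; split; eauto. }
  exists {P : T -> Prop | exists a, Rel a a /\ P = Rel a}, (fun P => proj1_sig P).
  split; [|split; [|split]].
  - intros P Q y Hne HP HQ. apply Hne, eq_sig_hprop; [intros; apply proof_irrelevance|].
    pose proof (proj2_sig P) as [a [_ EP]]. pose proof (proj2_sig Q) as [b [_ EQ]].
    rewrite EP, EQ in *. exact (Hclass a b y HP HQ).
  - intros P Q y z Hne HP HQ.
    pose proof (proj2_sig P) as [a [_ EP]]. pose proof (proj2_sig Q) as [b [_ EQ]].
    rewrite EP in HP. rewrite EQ in HQ.
    apply Hsep; eauto. intro Hyz. apply Hne, eq_sig_hprop; [intros; apply proof_irrelevance|].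
    rewrite EP, EQ. eauto.
  - intros P y z Hy Hz. pose proof (proj2_sig P) as [a [_ EP]].
    rewrite EP in Hy, Hz. eauto.
  - eapply Rle_trans; [exact Hmass|]. right. apply mu_ext. intro y; split.
    + intro Hy. exists (exist _ (Rel y) (ex_intro _ y (conj Hy eq_refl))). exact Hy.
    + intros [P Hy]. pose proof (proj2_sig P) as [a [_ EP]]. rewrite EP in Hy. eauto.
Qed.

Lemma pushforward_finite_pos_measure {S T : Type} (mu : (S -> Prop) -> R) (g : S -> T) :
  finite_pos_measure mu -> finite_pos_measure (fun A => mu (fun s => A (g s))).
Proof.
  intros [Hpos Hadd]. split; [intro; apply Hpos|].
  intros A HA. apply (Hadd (fun n s => A n (g s))). intros i j s; apply HA.
Qed.

(** Tightness reduces to a finite set [G K], on which the [w]-limit of the sets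
    [Q x] is attained at a single [x]. *)
Lemma mu_uf_lim_ge {T X : Type} (mu : (T -> Prop) -> R) (w : ultrafilter X)
    (G : nat -> T -> Prop) (Q : X -> T -> Prop) (c : R) :
  finite_pos_measure mu ->
  (forall k a, G k a -> G (S k) a) -> (forall a, exists k, G k a) ->
  (forall k, exists l, forall a, G k a -> In a l) ->
  (forall x, c * mu (fun _ => True) <= mu (Q x)) ->
  c * mu (fun _ => True) <= mu (fun a => uf w (fun x => Q x a)).
Proof.
  intros Hmu Hinc Hcov Hfin HQ.
  set (Qlim a := uf w (fun x => Q x a)).
  apply Rnot_lt_le; intro Hlt.
  destruct (mu_compl_exhaustion_lt T mu Hmu G Hinc Hcov
              (c * mu (fun _ => True) - mu Qlim) ltac:(lra)) as [K HK].
  destruct (Hfin K) as [l Hl].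
  assert (Hw : uf w (fun x => forall a, In a l -> (Q x a <-> Qlim a))).
  { apply uf_forall_list. intros a _. destruct (classic (Qlim a)) as [Ha|Ha].
    - eapply uf_mono; [|exact Ha]. cbv beta; tauto.
    - eapply uf_mono; [|exact (uf_compl X w _ Ha)]. cbv beta; tauto. }
  destruct (uf_inhabited X w _ Hw) as [x Hx].
  pose proof (HQ x) as Hmass. rewrite (mu_split T mu Hmu (Q x) (G K)) in Hmass.
  assert (Hin : mu (fun a => Q x a /\ G K a) <= mu Qlim).
  { apply (mu_mono T mu Hmu). intros a [Ha HG]. apply (Hx a (Hl a HG)), Ha. }
  assert (Hout : mu (fun a => Q x a /\ ~ G K a) <= mu (fun a => ~ G K a)).
  { apply (mu_mono T mu Hmu). tauto. }
  lra.
Qed.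

Section LimitRelation.

Variables (X : Type) (d : X -> X -> R) (w : ultrafilter X).
Hypotheses (Hmetric : is_metric d) (Hbg : bounded_geometry d).
Variables (D : Xlim d w -> X -> Prop) (t : Xlim d w -> X -> X).
Hypothesis Htr : forall a, translate_to d w (D a) (t a) (proj1_sig a).

Lemma ulim_sparse_per (m F : nat) (Rel : X -> X -> X -> Prop) :
  (forall x, sparse_per d m F (Rel x)) ->
  sparse_per (d_lim d w) m F (fun a b => uf w (fun x => Rel x (t a x) (t b x))).
Proof.
  intro Hper.
  assert (Hdom : forall a b, uf w (fun x => D a x /\ D b x))
    by (intros; apply uf_inter; apply (proj2 (proj1 (Htr _)))).
  pose proof (fun a b => d_lim_ulim X d w Hmetric Hbg a b _ _ _ _ (Htr a) (Htr b)) as Hlim.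
  split.
  - intros a b Hab. eapply uf_mono; [|exact Hab]. intro x; apply (per_sym _ _ _ _ (Hper x)).
  - intros a b e Hab Hbe. eapply uf_mono; [|exact (uf_inter X w _ _ Hab Hbe)].
    intros x [H1 H2]. exact (per_trans _ _ _ _ (Hper x) _ _ _ H1 H2).
  - intros a b Hab. apply (ulim_R_le X w _ _ _ _ (Hlim a b)).
    eapply uf_mono; [|exact (uf_inter X w _ _ (Hdom a b) Hab)].
    intros x [Hx H]. exact (conj Hx (per_diam _ _ _ _ (Hper x) _ _ H)).
  - intros a b Ha Hb Hab. apply (ulim_R_ge X w _ _ _ _ (Hlim a b)).
    eapply uf_mono;
      [|exact (uf_inter3 X w _ _ _ (Hdom a b) (uf_inter X w _ _ Ha Hb) (uf_compl X w _ Hab))].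
    intros x [Hx [[H1 H2] H3]]. exact (conj Hx (per_sep _ _ _ _ (Hper x) _ _ H1 H2 H3)).
Qed.

End LimitRelation.

Theorem lemma7p10 (X : Type) (d : X -> X -> R) (c : R) (f : nat -> nat) :
  is_space d ->
  0 < c <= 1 ->
  MSP d c f ->
  forall w : ultrafilter X, in_boundary w ->
    MSP (d_lim d w) c f.
Proof.
  intros [Hmetric [_ Hbg]] _ Hmsp w _.
  apply MSP_of_sparse_per; [exact (proj1 Hmsp)|]. intros m mu Hmu.
  assert (Hex : forall a : Xlim d w, exists Dt : (X -> Prop) * (X -> X),
             translate_to d w (fst Dt) (snd Dt) (proj1_sig a))
    by (intro a; destruct (proj2_sig a) as [D [t Ht]]; exists (D, t); exact Ht).
  destruct (choice _ Hex) as [tr Htr].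
  set (D a := fst (tr a)). set (t a := snd (tr a)).
  assert (Hfiber : forall x, exists Rel, sparse_per d m (f m) Rel /\
             c * mu (fun _ => True) <= mu (fun a => Rel (t a x) (t a x))).
  { intro x. exact (MSP_sparse_per d c f Hmsp m _
                      (pushforward_finite_pos_measure mu (fun a => t a x) Hmu)). }
  destruct (choice _ Hfiber) as [Rel HRel].
  exists (fun a b => uf w (fun x => Rel x (t a x) (t b x))). split.
  - apply (ulim_sparse_per X d w Hmetric Hbg D t Htr). intro x; apply HRel.
  - apply (mu_uf_lim_ge mu w (fun K a => displacement_le X d (D a) (t a) (INR K)));
      [exact Hmu| | | |].
    + intros K a H x Hx. rewrite S_INR. specialize (H x Hx). lra.
    + intro a. destruct (Htr a) as [[[_ [K HK]] _] _]. destruct (nat_above K) as [n Hn].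
      exists n. intros x Hx. exact (Rle_trans _ _ _ (HK x Hx) Hn).
    + intro K. exact (displacement_le_finite X d w Hbg D t Htr (INR K)).
    + intro x. apply HRel.
Qed.
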